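(* Let $\varphi:\Sigma\to I$ depend only on finitely many coordinates of $\omega$, and suppose its graph $\Gamma$ drifts up (resp. down). For $n\ge0$ let $\varphi_n$ be the function whose graph is $F^n(\Gamma)$, i.e. $\varphi_n(\omega)=f_{\omega_{-1}}\circ\dots\circ f_{\omega_{-n}}(\varphi(\sigma^{-n}\omega))$. Then: (1) the pointwise limit $\varphi_{+\infty}(\omega)=\lim_{n\to+\infty}\varphi_n(\omega)$ exists for every $\omega$ and defines a measurable function $\varphi_{+\infty}:\Sigma\to I$; (2) $\varphi_{+\infty}(\omega)$ does not depend on the future of $\omega$: if $\omega_j=\omega'_j$ for all $j\le-1$ then $\varphi_{+\infty}(\omega)=\varphi_{+\infty}(\omega')$; (3) $\varphi_{+\infty}$ is $F$-invariant: $\varphi_{+\infty}(\sigma\omega)=f_{\omega_0}(\varphi_{+\infty}(\omega))$.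
   Context: $\Sigma$: two-sided transitive subshift of finite type over $\{1,\dots,N\}$ with left shift $\sigma$, $(\sigma\omega)_n=\omega_{n+1}$. $I=[0,1]$; $F(\omega,x)=(\sigma\omega,f_{\omega_0}(x))$ with $f_k:I\to I$ strictly increasing $C^1$ diffeomorphisms onto their images. For functions $\psi_1,\psi_2:\Sigma\to I$, $\psi_1<\psi_2$ means $\psi_1(\omega)<\psi_2(\omega)$ for all $\omega$; the same notation is used for their graphs. $F(\Gamma)$ is again the graph of a function; the graph $\Gamma$ drifts up (down) if $F(\Gamma)>\Gamma$ (resp. $F(\Gamma)<\Gamma$). *)

From Stdlib Require Import Reals ZArith.
Open Scope R_scope.

(* Two-sided sequences over the alphabet {1,...,N} (encoded in nat). *)
Definition seqZ := Z -> nat.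

Definition shiftL (w : seqZ) : seqZ := fun n => w (n + 1)%Z.
Definition shiftinv (w : seqZ) : seqZ := fun n => w (n - 1)%Z.

Definition in_Sigma (N : nat) (A : nat -> nat -> bool) (w : seqZ) : Prop :=
  forall n : Z, (1 <= w n <= N)%nat /\ A (w n) (w (n + 1)%Z) = true.

Inductive apath (A : nat -> nat -> bool) : nat -> nat -> Prop :=
| apath_one i j : A i j = true -> apath A i j
| apath_cons i j k : A i j = true -> apath A j k -> apath A i k.

Definition transitive_SFT (N : nat) (A : nat -> nat -> bool) : Prop :=
  forall i j, (1 <= i <= N)%nat -> (1 <= j <= N)%nat -> apath A i j.

Definition inI (x : R) : Prop := 0 <= x <= 1.

(* f : I -> I strictly increasing C^1 diffeomorphism onto its image:
   maps I into I, strictly increasing on I, has a derivative (within I)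
   which is continuous on I and positive (so the inverse is C^1 too). *)
Definition C1_diffeo_incr_on_I (f : R -> R) : Prop :=
  (forall x, inI x -> inI (f x)) /\
  (forall x y, inI x -> inI y -> x < y -> f x < f y) /\
  exists g : R -> R,
    (forall x, inI x -> 0 < g x) /\
    (forall x, inI x -> forall eps, 0 < eps -> exists delta, 0 < delta /\
        forall y, inI y -> y <> x -> Rabs (y - x) < delta ->
          Rabs ((f y - f x) / (y - x) - g x) < eps) /\
    (forall x, inI x -> forall eps, 0 < eps -> exists delta, 0 < delta /\
        forall y, inI y -> Rabs (y - x) < delta -> Rabs (g y - g x) < eps).

Definition finitely_many_coords (N : nat) (A : nat -> nat -> bool)
  (phi : seqZ -> R) : Prop :=
  exists M : Z, forall w w', in_Sigma N A w -> in_Sigma N A w' ->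
    (forall j, (- M <= j <= M)%Z -> w j = w' j) -> phi w = phi w'.

(* phi_n : the function whose graph is F^n(graph phi):
   phi_0 = phi, phi_{n+1}(w) = f_{w_{-1}} (phi_n (sigma^{-1} w)),
   i.e. phi_n(w) = f_{w_{-1}} o ... o f_{w_{-n}} (phi (sigma^{-n} w)). *)
Fixpoint iter_graph (f : nat -> R -> R) (phi : seqZ -> R) (n : nat) : seqZ -> R :=
  match n with
  | O => phi
  | S m => fun w => f (w (-1)%Z) (iter_graph f phi m (shiftinv w))
  end.

Definition drifts_up (N : nat) (A : nat -> nat -> bool) (f : nat -> R -> R)
  (phi : seqZ -> R) : Prop :=
  forall w, in_Sigma N A w -> phi w < iter_graph f phi 1 w.

Definition drifts_down (N : nat) (A : nat -> nat -> bool) (f : nat -> R -> R)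
  (phi : seqZ -> R) : Prop :=
  forall w, in_Sigma N A w -> iter_graph f phi 1 w < phi w.

(* sigma-algebra on sequences generated by the cylinder sets {w | w_j = a};
   its trace on Sigma is the Borel sigma-algebra of Sigma (product topology). *)
Inductive cyl_sigma : (seqZ -> Prop) -> Prop :=
| cs_cyl (j : Z) (a : nat) : cyl_sigma (fun w => w j = a)
| cs_compl (S : seqZ -> Prop) : cyl_sigma S -> cyl_sigma (fun w => ~ S w)
| cs_union (S : nat -> seqZ -> Prop) :
    (forall n, cyl_sigma (S n)) -> cyl_sigma (fun w => exists n, S n w)
| cs_ext (S T : seqZ -> Prop) :
    (forall w, S w <-> T w) -> cyl_sigma S -> cyl_sigma T.

Definition measurable_on_Sigma (N : nat) (A : nat -> nat -> bool)
  (psi : seqZ -> R) : Prop :=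
  forall a : R, exists S, cyl_sigma S /\
    forall w, in_Sigma N A w -> (psi w <= a <-> S w).

(* The proof has three ingredients.
   - Monotonicity: since every f_k is increasing, the inequality φ < φ_1
     (resp. φ > φ_1) propagates to φ_n < φ_{n+1} (resp. >), so the bounded
     sequence φ_n(ω) is monotone and converges; its limit φ_{+∞} is a
     pointwise limit, chosen with Hilbert's ε-operator.
   - Locality: if φ depends only on the coordinates in [-K, K], then φ_n
     depends only on those in [-(K+n), max(K-n, -1)].  Hence each φ_n is
     measurable for the cylinder σ-algebra, and for n > K the value φ_n(ω)
     depends only on the past of ω, which passes to the limit.
   - Invariance: φ_{n+1}(σω) = f_{ω_0}(φ_n(ω)) and f_{ω_0} is continuous on I. *)

From Stdlib Require Import Reals ZArith Lia Lra Classical FunctionalExtensionality ClassicalEpsilon.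
Open Scope R_scope.

Lemma cyl_or (P Q : seqZ -> Prop) :
  cyl_sigma P -> cyl_sigma Q -> cyl_sigma (fun w => P w \/ Q w).
Proof.
  intros HP HQ.
  apply (cs_ext (fun w => exists n, (match n with O => P | S _ => Q end) w)).
  - intros w; split.
    + intros [[|n] H]; auto.
    + intros [H|H]; [exists O | exists 1%nat]; auto.
  - apply cs_union; intros [|n]; auto.
Qed.

Lemma cyl_and (P Q : seqZ -> Prop) :
  cyl_sigma P -> cyl_sigma Q -> cyl_sigma (fun w => P w /\ Q w).
Proof.
  intros HP HQ.
  apply (cs_ext (fun w => ~ (~ P w \/ ~ Q w))).
  - intros w; split; [intros H; split; apply NNPP; tauto | tauto].
  - apply cs_compl, cyl_or; apply cs_compl; auto.
Qed.

Lemma cyl_const (P : Prop) : cyl_sigma (fun _ => P).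
Proof.
  assert (Htrue : cyl_sigma (fun _ => True)).
  { apply (cs_ext (fun w => w 0%Z = O \/ w 0%Z <> O)).
    - intros w; split; auto; intros _; apply classic.
    - apply cyl_or; [|apply cs_compl]; apply cs_cyl. }
  destruct (classic P) as [HP|HnP].
  - apply (cs_ext (fun _ => True)); tauto.
  - apply (cs_ext (fun _ => ~ True)); [tauto | now apply cs_compl].
Qed.

Lemma cyl_forall (S : nat -> seqZ -> Prop) :
  (forall n, cyl_sigma (S n)) -> cyl_sigma (fun w => forall n, S n w).
Proof.
  intros H. apply (cs_ext (fun w => ~ exists n, ~ S n w)).
  - intros w; split.
    + intros H1 n. apply NNPP; intros H2; apply H1; eauto.
    + intros H1 [n H2]; auto.
  - apply cs_compl, cs_union; intros n; apply cs_compl; auto.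
Qed.

Definition upd (w : seqZ) (j : Z) (a : nat) : seqZ :=
  fun k => if Z.eq_dec k j then a else w k.

(* A set of sequences determined by the coordinates in a finite window
   [lo, lo + k) is a cylinder set: induction on k, splitting over the value
   of the last coordinate of the window. *)
Lemma cyl_of_window (lo : Z) (k : nat) (P : seqZ -> Prop) :
  (forall w w', (forall j, (lo <= j < lo + Z.of_nat k)%Z -> w j = w' j) ->
     P w -> P w') ->
  cyl_sigma P.
Proof.
  revert P; induction k as [|k IH]; intros P HP.
  - destruct (classic (exists w0, P w0)) as [[w0 H0]|Hn].
    + apply (cs_ext (fun _ => True)); [|apply cyl_const].
      intros w; split; auto; intros _.
      apply (HP w0); auto; intros j Hj; lia.
    + apply (cs_ext (fun _ => False)); [|apply cyl_const].
      intros w; split; [tauto|]; intros Hw; apply Hn; eauto.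
  - set (j0 := (lo + Z.of_nat k)%Z).
    assert (upd_same : forall w, (forall j, w j = upd w j0 (w j0) j)).
    { intros w j; unfold upd; destruct (Z.eq_dec j j0); subst; auto. }
    apply (cs_ext (fun w => exists a : nat, w j0 = a /\ P (upd w j0 a))).
    + intros w; split.
      * intros [a [<- Hp]]. apply (HP (upd w j0 (w j0))); [|exact Hp].
        intros j _; symmetry; apply upd_same.
      * intros Hp. exists (w j0); split; auto.
        apply (HP w); [|exact Hp]. intros j _; apply upd_same.
    + apply cs_union; intros a. apply cyl_and; [apply cs_cyl|].
      apply IH; intros w w' Hww' Hp. apply (HP (upd w j0 a)); auto.
      intros j Hj; unfold upd; destruct (Z.eq_dec j j0); auto.
      apply Hww'; lia.
Qed.

Section CylinderMeasurability.

Variables (N : nat) (A : nat -> nat -> bool).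

(* It is an explicit cylinder set, defined on all sequences. *)
Definition window_preimage (psi : seqZ -> R) (lo hi : Z) (Q : R -> Prop)
  (w : seqZ) : Prop :=
  exists w', in_Sigma N A w' /\
    (forall j, (lo <= j <= hi)%Z -> w j = w' j) /\ Q (psi w').

Lemma window_preimage_cyl psi lo hi Q : cyl_sigma (window_preimage psi lo hi Q).
Proof.
  apply (cyl_of_window lo (Z.to_nat (hi - lo + 1))).
  intros w w' Hww [w'' [Hw'' [Hagree HQ]]].
  exists w''; split; [exact Hw''|]; split; [|exact HQ].
  intros j Hj; rewrite <- Hww by lia; auto.
Qed.

Lemma window_preimage_spec psi lo hi Q :
  (forall w w', in_Sigma N A w -> in_Sigma N A w' ->
     (forall j, (lo <= j <= hi)%Z -> w j = w' j) -> psi w = psi w') ->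
  forall w, in_Sigma N A w -> (window_preimage psi lo hi Q w <-> Q (psi w)).
Proof.
  intros Hloc w Hw; split.
  - intros [w' [Hw' [Hagree HQ]]]. now rewrite (Hloc w w').
  - intros HQ; exists w; auto.
Qed.

(* A pointwise limit on Σ of functions whose strict sublevel sets are given
   by cylinder sets is measurable:
   l(w) <= a  iff  for every m, eventually u_n(w) < a + 1/(m+1). *)
Lemma pointwise_limit_measurable (u : nat -> seqZ -> R) (l : seqZ -> R)
  (U : nat -> R -> seqZ -> Prop) :
  (forall n b, cyl_sigma (U n b)) ->
  (forall n b w, in_Sigma N A w -> (U n b w <-> u n w < b)) ->
  (forall w, in_Sigma N A w -> Un_cv (fun n => u n w) (l w)) ->
  measurable_on_Sigma N A l.
Proof.
  intros Ucyl Uspec Hcv a.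
  exists (fun w => forall m, exists n0, forall n,
            U (n + n0)%nat (a + / INR (S m)) w).
  split.
  { apply cyl_forall; intros m. apply cs_union; intros n0.
    apply cyl_forall; auto. }
  intros w Hw; split.
  - intros Hla m.
    assert (Heps : 0 < / INR (S m)) by (apply Rinv_0_lt_compat, lt_0_INR; lia).
    destruct (Hcv w Hw _ Heps) as [n0 Hn0]. exists n0; intros n.
    apply Uspec; auto.
    specialize (Hn0 (n + n0)%nat ltac:(lia)).
    unfold Rdist in Hn0; apply Rabs_def2 in Hn0; lra.
  - intros Hev. apply Rnot_lt_le; intros Hal.
    destruct (archimed_cor1 ((l w - a) / 2)) as [m [Hm Hmpos]]; [lra|].
    destruct (Hev (m - 1)%nat) as [n0 Hn0].
    destruct (Hcv w Hw ((l w - a) / 2)) as [n1 Hn1]; [lra|].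
    specialize (Hn0 n1).
    specialize (Hn1 (n1 + n0)%nat ltac:(lia)).
    unfold Rdist in Hn1; apply Rabs_def2 in Hn1.
    apply Uspec in Hn0; auto.
    replace (S (m - 1)) with m in Hn0 by lia.
    lra.
Qed.

End CylinderMeasurability.

Lemma shiftinv_Sigma N A w : in_Sigma N A w -> in_Sigma N A (shiftinv w).
Proof.
  intros H n. unfold shiftinv. destruct (H (n - 1)%Z) as [H1 H2].
  replace (n + 1 - 1)%Z with (n - 1 + 1)%Z by lia. auto.
Qed.

Lemma shiftL_Sigma N A w : in_Sigma N A w -> in_Sigma N A (shiftL w).
Proof.
  intros H n. unfold shiftL. destruct (H (n + 1)%Z) as [H1 H2]. auto.
Qed.

Lemma shiftinv_shiftL w : shiftinv (shiftL w) = w.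
Proof.
  apply functional_extensionality; intros n. unfold shiftinv, shiftL. f_equal; lia.
Qed.

Lemma Un_cv_in_I (u : nat -> R) (l : R) :
  (forall n, inI (u n)) -> Un_cv u l -> inI l.
Proof.
  intros Hu Hl.
  assert (Hconst : forall c, Un_cv (fun _ => c) c).
  { intros c eps Heps; exists O; intros n _.
    unfold Rdist; rewrite Rminus_diag_eq, Rabs_R0; auto. }
  split.
  - apply (Rle_cv_lim (Un := fun _ => 0) (Vn := u)); auto; apply Hu.
  - apply (Rle_cv_lim (Un := u) (Vn := fun _ => 1)); auto; apply Hu.
Qed.

Lemma C1_continuous_on_I f : C1_diffeo_incr_on_I f ->
  forall x, inI x -> forall eps, 0 < eps -> exists delta, 0 < delta /\
    forall y, inI y -> Rabs (y - x) < delta -> Rabs (f y - f x) < eps.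
Proof.
  intros [_ [_ [g [_ [Hderiv _]]]]] x Hx eps Heps.
  destruct (Hderiv x Hx 1 Rlt_0_1) as [d1 [Hd1 Hquot]].
  set (c := Rabs (g x) + 1).
  assert (Hc : 0 < c) by (unfold c; pose proof (Rabs_pos (g x)); lra).
  exists (Rmin d1 (eps / c)); split.
  { apply Rmin_pos; auto. apply Rdiv_lt_0_compat; auto. }
  intros y Hy Hxy.
  destruct (Req_dec y x) as [->|Hne].
  { replace (f x - f x) with 0 by ring. rewrite Rabs_R0; auto. }
  assert (Hyx1 : Rabs (y - x) < d1) by (eapply Rlt_le_trans; [exact Hxy | apply Rmin_l]).
  assert (Hyx2 : Rabs (y - x) < eps / c) by (eapply Rlt_le_trans; [exact Hxy | apply Rmin_r]).
  assert (Hq : Rabs ((f y - f x) / (y - x)) < c).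
  { specialize (Hquot y Hy Hne Hyx1).
    pose proof (Rabs_triang_inv ((f y - f x) / (y - x)) (g x)). unfold c; lra. }
  assert (Hnz : y - x <> 0) by lra.
  replace (f y - f x) with ((f y - f x) / (y - x) * (y - x)) by (field; auto).
  rewrite Rabs_mult.
  apply Rle_lt_trans with (c * Rabs (y - x)).
  { apply Rmult_le_compat_r; [apply Rabs_pos | lra]. }
  replace eps with (c * (eps / c)) by (field; lra).
  apply Rmult_lt_compat_l; auto.
Qed.

Lemma Un_cv_C1_comp f u l : C1_diffeo_incr_on_I f ->
  (forall n, inI (u n)) -> inI l -> Un_cv u l -> Un_cv (fun n => f (u n)) (f l).
Proof.
  intros Hf Hu Hl Hcv eps Heps.
  destruct (C1_continuous_on_I f Hf l Hl eps Heps) as [d [Hd Hcont]].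
  destruct (Hcv d Hd) as [n0 Hn0]. exists n0; intros n Hn.
  apply Hcont; auto. apply Hn0; auto.
Qed.

Lemma iter_graph_shiftL f phi n w :
  iter_graph f phi (S n) (shiftL w) = f (w 0%Z) (iter_graph f phi n w).
Proof. simpl. now rewrite shiftinv_shiftL. Qed.

Definition graph_limit (f : nat -> R -> R) (phi : seqZ -> R) (w : seqZ) : R :=
  epsilon (inhabits 0) (fun l => Un_cv (fun n => iter_graph f phi n w) l).

Lemma graph_limit_spec f phi w :
  (exists l, Un_cv (fun n => iter_graph f phi n w) l) ->
  Un_cv (fun n => iter_graph f phi n w) (graph_limit f phi w).
Proof. intros Hex. unfold graph_limit. now apply epsilon_spec. Qed.

Section Iterates.

Variables (N : nat) (A : nat -> nat -> bool) (f : nat -> R -> R) (phi : seqZ -> R).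
Hypothesis f_diffeo : forall k, (1 <= k <= N)%nat -> C1_diffeo_incr_on_I (f k).
Hypothesis phi_in_I : forall w, in_Sigma N A w -> inI (phi w).

Lemma iter_graph_in_I n w : in_Sigma N A w -> inI (iter_graph f phi n w).
Proof.
  revert w; induction n as [|n IH]; intros w Hw; simpl; auto.
  destruct (Hw (-1)%Z) as [Hk _]. apply (proj1 (f_diffeo _ Hk)).
  apply IH, shiftinv_Sigma; auto.
Qed.

Lemma iter_graph_step_rel (rel : R -> R -> Prop) :
  (forall k x y, (1 <= k <= N)%nat -> inI x -> inI y -> rel x y ->
     rel (f k x) (f k y)) ->
  (forall w, in_Sigma N A w -> rel (phi w) (iter_graph f phi 1 w)) ->
  forall n w, in_Sigma N A w ->
    rel (iter_graph f phi n w) (iter_graph f phi (S n) w).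
Proof.
  intros Hpres Hbase n; induction n as [|n IH]; intros w Hw; auto.
  destruct (Hw (-1)%Z) as [Hk _]. pose proof (shiftinv_Sigma N A w Hw).
  change (rel (f (w (-1)%Z) (iter_graph f phi n (shiftinv w)))
              (f (w (-1)%Z) (iter_graph f phi (S n) (shiftinv w)))).
  apply Hpres; auto; apply iter_graph_in_I; auto.
Qed.

(* A drifting graph yields monotone bounded, hence convergent, iterates. *)
Lemma iter_graph_converges :
  drifts_up N A f phi \/ drifts_down N A f phi ->
  forall w, in_Sigma N A w ->
    exists l, Un_cv (fun n => iter_graph f phi n w) l.
Proof.
  intros Hdrift w Hw.
  assert (f_incr : forall k x y, (1 <= k <= N)%nat -> inI x -> inI y ->
            x < y -> f k x < f k y).
  { intros k x y Hk; apply (f_diffeo k Hk). }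
  pose proof (fun n => iter_graph_in_I n w Hw) as HI.
  destruct Hdrift as [Hup|Hdown].
  - destruct (growing_cv (fun n => iter_graph f phi n w)) as [l Hl]; eauto.
    + intros n; left; apply (iter_graph_step_rel Rlt); auto.
    + exists 1; intros x [n ->]; apply HI.
  - destruct (decreasing_cv (fun n => iter_graph f phi n w)) as [l Hl]; eauto.
    + intros n; left; apply (iter_graph_step_rel Rgt); auto.
      intros k x y Hk Hx Hy; apply f_incr; auto.
    + exists 0; intros x [n ->]; unfold opp_seq.
      destruct (HI n); lra.
Qed.

Definition depends_on_window (K : nat) : Prop :=
  forall w w', in_Sigma N A w -> in_Sigma N A w' ->
    (forall j, (- Z.of_nat K <= j <= Z.of_nat K)%Z -> w j = w' j) ->
    phi w = phi w'.

Lemma iter_graph_local (K : nat) : depends_on_window K ->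
  forall n w w', in_Sigma N A w -> in_Sigma N A w' ->
    (forall j, (- (Z.of_nat K + Z.of_nat n) <= j
                <= Z.max (Z.of_nat K - Z.of_nat n) (-1))%Z -> w j = w' j) ->
    iter_graph f phi n w = iter_graph f phi n w'.
Proof.
  intros Hphi n; induction n as [|n IH]; intros w w' Hw Hw' Hagree; simpl.
  - apply Hphi; auto; intros j Hj; apply Hagree; lia.
  - rewrite (Hagree (-1)%Z) by lia. f_equal.
    apply IH; try apply shiftinv_Sigma; auto.
    intros j Hj; unfold shiftinv; apply Hagree; lia.
Qed.

Section Limit.

Hypothesis drift : drifts_up N A f phi \/ drifts_down N A f phi.

Lemma graph_limit_cv w : in_Sigma N A w ->
  Un_cv (fun n => iter_graph f phi n w) (graph_limit f phi w).
Proof. intros Hw. apply graph_limit_spec, iter_graph_converges; auto. Qed.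

Lemma graph_limit_in_I w : in_Sigma N A w -> inI (graph_limit f phi w).
Proof.
  intros Hw. apply (Un_cv_in_I (fun n => iter_graph f phi n w)).
  - intros n; apply iter_graph_in_I; auto.
  - apply graph_limit_cv; auto.
Qed.

(* Invariance: pass to the limit in φ_{n+1}(σω) = f_{ω_0}(φ_n(ω)), using
   the continuity of f_{ω_0} on I. *)
Lemma graph_limit_invariant w : in_Sigma N A w ->
  graph_limit f phi (shiftL w) = f (w 0%Z) (graph_limit f phi w).
Proof.
  intros Hw. destruct (Hw 0%Z) as [Hk _].
  apply (UL_sequence (fun n => iter_graph f phi (n + 1) (shiftL w))).
  - apply (CV_shift' _ _ _ (graph_limit_cv _ (shiftL_Sigma N A w Hw))).
  - replace (fun n => iter_graph f phi (n + 1) (shiftL w))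
      with (fun n => f (w 0%Z) (iter_graph f phi n w)).
    + apply Un_cv_C1_comp; auto using iter_graph_in_I, graph_limit_in_I, graph_limit_cv.
    + apply functional_extensionality; intros n.
      rewrite Nat.add_1_r. symmetry; apply iter_graph_shiftL.
Qed.

Variable K : nat.
Hypothesis phi_local : depends_on_window K.

(* Each φ_n is read off the window [-(K+n), K], so its strict sublevel sets
   are cylinder sets and the pointwise limit is measurable. *)
Lemma graph_limit_measurable : measurable_on_Sigma N A (graph_limit f phi).
Proof.
  apply (pointwise_limit_measurable N A (fun n => iter_graph f phi n) _
           (fun n b => window_preimage N A (iter_graph f phi n)
                         (- (Z.of_nat K + Z.of_nat n)) (Z.of_nat K) (fun x => x < b)));
    auto using window_preimage_cyl, graph_limit_cv.
  intros n b w Hw. apply window_preimage_spec; auto.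
  intros w1 w2 Hw1 Hw2 Hagree. apply (iter_graph_local K); auto.
  intros j Hj; apply Hagree; lia.
Qed.

(* For n > K the value φ_n(ω) depends only on the past of ω, hence so does
   the limit. *)
Lemma graph_limit_past_only w w' : in_Sigma N A w -> in_Sigma N A w' ->
  (forall j, (j <= -1)%Z -> w j = w' j) ->
  graph_limit f phi w = graph_limit f phi w'.
Proof.
  intros Hw Hw' Hpast.
  apply (UL_sequence (fun n => iter_graph f phi (n + S K) w)).
  - apply (CV_shift' _ _ _ (graph_limit_cv w Hw)).
  - replace (fun n => iter_graph f phi (n + S K) w)
      with (fun n => iter_graph f phi (n + S K) w').
    + apply (CV_shift' _ _ _ (graph_limit_cv w' Hw')).
    + apply functional_extensionality; intros n.
      apply (iter_graph_local K); auto.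
      intros j Hj; symmetry; apply Hpast; lia.
Qed.

End Limit.

End Iterates.

Theorem mainTheorem13 (N : nat) (A : nat -> nat -> bool) (f : nat -> R -> R)
  (phi : seqZ -> R) :
  (1 <= N)%nat ->
  transitive_SFT N A ->
  (forall k, (1 <= k <= N)%nat -> C1_diffeo_incr_on_I (f k)) ->
  (forall w, in_Sigma N A w -> inI (phi w)) ->
  finitely_many_coords N A phi ->
  (drifts_up N A f phi \/ drifts_down N A f phi) ->
  exists phi_inf : seqZ -> R,
    (forall w, in_Sigma N A w ->
       Un_cv (fun n => iter_graph f phi n w) (phi_inf w)) /\
    (forall w, in_Sigma N A w -> inI (phi_inf w)) /\
    measurable_on_Sigma N A phi_inf /\
    (forall w w', in_Sigma N A w -> in_Sigma N A w' ->
       (forall j, (j <= -1)%Z -> w j = w' j) -> phi_inf w = phi_inf w') /\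
    (forall w, in_Sigma N A w -> phi_inf (shiftL w) = f (w (0%Z)) (phi_inf w)).
Proof.
  intros _ _ Hf Hphi [M HM] Hdrift.
  assert (Hlocal : depends_on_window N A phi (Z.to_nat M)).
  { intros w w' Hw Hw' Hagree. apply HM; auto. intros j Hj; apply Hagree; lia. }
  exists (graph_limit f phi).
  split; [|split; [|split; [|split]]].
  - apply graph_limit_cv; auto.
  - apply graph_limit_in_I; auto.
  - apply (graph_limit_measurable N A f phi Hf Hphi Hdrift (Z.to_nat M)); auto.
  - apply (graph_limit_past_only N A f phi Hf Hphi Hdrift (Z.to_nat M)); auto.
  - apply graph_limit_invariant; auto.
Qed.
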